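(* Let $\Omega\subset\mathbb{R}^d$ be a bounded domain, $\kappa\in L^\infty(\Omega)$ with $\kappa\ge\kappa_0>0$, and $a(u,v)=\int_\Omega\kappa\nabla u\cdot\nabla v\,dx$, $\|u\|_a^2=a(u,u)$. Let $V_H\subset H^1_0(\Omega)$ be a finite-dimensional space with $V_H=V_{H,1}+V_{H,2}$ for subspaces $V_{H,1},V_{H,2}$, and define $$\gamma=\sup_{v_1\in V_{H,1},v_2\in V_{H,2}}\frac{(v_1,v_2)}{\|v_1\|\|v_2\|},\quad \gamma_a=\sup_{v_1\in V_{H,1},v_2\in V_{H,2}}\frac{a(v_1,v_2)}{\|v_1\|_a\|v_2\|_a},\quad \alpha=\sup_{v_2\in V_{H,2}}\frac{\|v_2\|_a}{\|v_2\|},$$ assuming $\gamma<1$ and $\gamma_a<1$. Let $\tau>0$, $N\ge2$, and let $u_{H,1}^n\in V_{H,1}$, $u_{H,2}^n\in V_{H,2}$ ($n=0,\dots,N$), $u_H^n=u_{H,1}^n+u_{H,2}^n$, satisfy for $n=1,\dots,N-1$: $$(u_H^{n+1}-2u_H^n+u_H^{n-1},w)+\frac{\tau^2}{2}a(u_{H,1}^{n+1}+u_{H,1}^{n-1}+2u_{H,2}^n,w)=0\quad\forall w\in V_{H,1},$$ $$(u_H^{n+1}-2u_H^n+u_H^{n-1},w)+\tau^2a(u_{H,1}^{n}+u_{H,2}^n,w)=0\quad\forall w\in V_{H,2}.$$ Let $E^{\frac12}=\|u_H^{1}-u_H^0\|^2+\frac{\tau^2}{2}\sum_{i=1,2}(\|u_{H,i}^{1}\|_a^2+\|u_{H,i}^0\|_a^2)+\tau^2a(u_{H,2}^{1},u_{H,1}^0)+\tau^2a(u_{H,1}^{1},u_{H,2}^0)-\frac{\tau^2}{2}\|u_{H,2}^{1}-u_{H,2}^0\|_a^2$.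 If $2(1-\gamma)\alpha^{-2}\ge\tau^2$, then for all $n=0,\dots,N-1$, $$\Big(1-\gamma^2-\frac{\alpha^2\tau^2}{2}\Big)\|u_{H,2}^{n+1}-u_{H,2}^n\|^2+\frac{\tau^2(1-\gamma_a)}{2}\sum_{i=1,2}\Big(\|u_{H,i}^{n+1}\|_a^2+\|u_{H,i}^n\|_a^2\Big)\le E^{\frac12}.$$
   Context: $(\cdot,\cdot)$ and $\|\cdot\|$ denote the $L^2(\Omega)$ inner product and norm. *)

From HB Require Import structures.
From mathcomp Require Import all_boot all_order all_algebra.
From mathcomp Require Import classical_sets reals.
Set Implicit Arguments. Unset Strict Implicit. Unset Printing Implicit Defensive.
Import Order.TTheory GRing.Theory Num.Theory.
Local Open Scope ring_scope.
Local Open Scope classical_set_scope.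

Definition inner_product (R : realType) (V : lmodType R) (b : V -> V -> R) :=
  [/\ (forall u v, b u v = b v u),
      (forall (c : R) u v w, b (c *: u + v) w = c * b u w + b v w)
    & (forall u, u != 0 -> 0 < b u u)].

Definition ipnorm (R : realType) (V : lmodType R) (b : V -> V -> R) (v : V) : R :=
  Num.sqrt (b v v).

Definition cs_const (R : realType) (V : vectType R) (b : V -> V -> R)
  (V1 V2 : {vspace V}) : R :=
  sup [set r : R | exists v1 v2, [/\ v1 \in V1, v2 \in V2, v1 != 0, v2 != 0 &
        r = b v1 v2 / (ipnorm b v1 * ipnorm b v2)]].

Definition inv_const (R : realType) (V : vectType R) (ip a : V -> V -> R)
  (V2 : {vspace V}) : R :=
  sup [set r : R | exists v2, [/\ v2 \in V2, v2 != 0 &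
        r = ipnorm a v2 / ipnorm ip v2]].

(* Testing the first equation with u_{H,1}^{n+1} - u_{H,1}^{n-1} and the
   second with u_{H,2}^{n+1} - u_{H,2}^{n-1} and adding, the scheme conserves
   the discrete energy E^{n+1/2} (the expression defining E^{1/2}, taken at
   times n, n+1).  The strengthened
   Cauchy-Schwarz inequality for (.,.) gives
   ||d_1 + d_2||^2 >= (1 - gamma^2) ||d_2||^2, the one for a gives
   2 a(v_1, v_2) >= - gamma_a (||v_1||_a^2 + ||v_2||_a^2) for the two mixed
   terms, and the inverse inequality ||v_2||_a <= alpha ||v_2|| controls the
   negative term - tau^2/2 ||u_{H,2}^{n+1} - u_{H,2}^n||_a^2.
   Since [sup] of a set that is not bounded above is 0, the inverse inequality
   needs the ratios ||v||_a / ||v|| to be bounded, which follows from finite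
   dimension via a (.,.)-orthogonal spanning family. *)

From HB Require Import structures.
From mathcomp Require Import all_boot all_order all_algebra.
From mathcomp Require Import boolp classical_sets reals.
From mathcomp Require Import lra zify.
Set Implicit Arguments. Unset Strict Implicit. Unset Printing Implicit Defensive.
Import Order.TTheory GRing.Theory Num.Theory.
Local Open Scope ring_scope.

Section InnerProduct.
Variables (R : realType) (V : lmodType R) (b : V -> V -> R).
Hypothesis bP : inner_product b.

Lemma ip_sym u v : b u v = b v u. Proof. by case: bP. Qed.

Lemma ipDl u v w : b (u + v) w = b u w + b v w.
Proof. by case: bP => _ lin _; rewrite -[u in LHS]scale1r lin mul1r. Qed.

Lemma ip0l w : b 0 w = 0.
Proof. by apply: (addrI (b 0 w)); rewrite -ipDl !addr0. Qed.

Lemma ipZl c u w : b (c *: u) w = c * b u w.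
Proof. by case: bP => _ lin _; rewrite -[c *: u]addr0 lin ip0l addr0. Qed.

Lemma ipNl u w : b (- u) w = - b u w.
Proof. by rewrite -scaleN1r ipZl mulN1r. Qed.

Lemma ipBl u v w : b (u - v) w = b u w - b v w.
Proof. by rewrite ipDl ipNl. Qed.

Lemma ipDr u v w : b w (u + v) = b w u + b w v.
Proof. by rewrite !(ip_sym w) ipDl. Qed.

Lemma ip0r w : b w 0 = 0.
Proof. by rewrite ip_sym ip0l. Qed.

Lemma ipZr c u w : b w (c *: u) = c * b w u.
Proof. by rewrite !(ip_sym w) ipZl. Qed.

Lemma ipNr u w : b w (- u) = - b w u.
Proof. by rewrite !(ip_sym w) ipNl. Qed.

Lemma ipBr u v w : b w (u - v) = b w u - b w v.
Proof. by rewrite !(ip_sym w) ipBl. Qed.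

Definition ip_linE := (ipDl, ipBl, ipNl, ipZl, ipDr, ipBr, ipNr, ipZr).

Lemma ip_ge0 v : 0 <= b v v.
Proof.
have [->|v0] := eqVneq v 0; first by rewrite ip0l.
by case: bP => _ _ /(_ v v0) /ltW.
Qed.

Lemma ipnorm0 : ipnorm b 0 = 0.
Proof. by rewrite /ipnorm ip0l sqrtr0. Qed.

Lemma sqr_ipnorm v : ipnorm b v ^+ 2 = b v v.
Proof. by rewrite sqr_sqrtr // ip_ge0. Qed.

Lemma ipnorm_gt0 v : v != 0 -> 0 < ipnorm b v.
Proof. by move=> v0; rewrite sqrtr_gt0; case: bP => _ _ /(_ v v0). Qed.

Lemma ipnormN v : ipnorm b (- v) = ipnorm b v.
Proof. by rewrite /ipnorm ipNl ipNr opprK. Qed.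

Lemma ip_cauchy_schwarz u v : b u v <= ipnorm b u * ipnorm b v.
Proof.
have [->|u0] := eqVneq u 0; first by rewrite ip0l ipnorm0 mul0r.
have [->|v0] := eqVneq v 0; first by rewrite ip0r ipnorm0 mulr0.
set nu := ipnorm b u; set nv := ipnorm b v.
have nu_gt0 : 0 < nu := ipnorm_gt0 u0.
have nv_gt0 : 0 < nv := ipnorm_gt0 v0.
have := ip_ge0 (nv *: u - nu *: v).
rewrite !ip_linE (ip_sym v u) -(sqr_ipnorm u) -(sqr_ipnorm v) -/nu -/nv => h.
have : 0 <= (nu * nv) * (nu * nv - b u v) by lra.
by rewrite pmulr_rge0 ?mulr_gt0 // subr_ge0.
Qed.

Lemma ip_pythagoras u v : b u v = 0 -> b (u + v) (u + v) = b u u + b v v.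
Proof. by move=> uv0; rewrite !ip_linE (ip_sym v u) uv0 addr0 add0r. Qed.

Lemma ip_add_le u v : b (u + v) (u + v) <= 2%:R * (b u u + b v v).
Proof. by have := ip_ge0 (u - v); rewrite !ip_linE (ip_sym v u) => h; lra. Qed.

(* Rewriting every pairing into its symmetric part lets [lra] identify
   [b u v] with [b v u]. *)
Definition sym_form u v := (b u v + b v u) / 2%:R.

Lemma ip_sym_formE u v : b u v = sym_form u v.
Proof. by rewrite /sym_form (ip_sym v u); lra. Qed.

End InnerProduct.

Section FiniteDimension.
Variables (R : realType) (V : vectType R) (b a : V -> V -> R).
Hypotheses (bP : inner_product b) (aP : inner_product a).

Fixpoint orth_seq (t : seq V) : Prop :=
  if t is e :: t' then (forall w, w \in <<t'>>%VS -> b e w = 0) /\ orth_seq t'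
  else True.

Lemma orth_proj_exists t x : orth_seq t ->
  exists2 p, p \in <<t>>%VS & forall w, w \in <<t>>%VS -> b (x - p) w = 0.
Proof.
elim: t => [_|e t IHt [e_orth /IHt [p pt p_orth]]].
  by exists 0 => [|w]; rewrite ?mem0v // span_nil memv0 => /eqP ->; rewrite ip0r.
have [->|e0] := eqVneq e 0.
  exists p => [|w]; first by rewrite span_cons (subvP (addvSr _ _)).
  rewrite span_cons => /memv_addP [_ /vlineP [k ->] [w' w't ->]].
  by rewrite scaler0 add0r p_orth.
have ee_neq0 : b e e != 0 by case: bP => _ _ /(_ e e0) /lt0r_neq0.
set c := b x e / b e e.
exists (p + c *: e) => [|w].
  by rewrite span_cons addvC memv_add // memvZ // memv_line.
rewrite span_cons => /memv_addP [_ /vlineP [k ->] [w' w't ->]].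
have := p_orth w' w't; rewrite !(ip_linE bP) (ip_sym bP p e).
by rewrite (e_orth p pt) (e_orth w' w't) /c addr0 mulrCA divfK // => h; lra.
Qed.

Lemma orth_seq_span s : exists2 t, orth_seq t & (<<s>> <= <<t>>)%VS.
Proof.
elim: s => [|x s [t t_orth st]]; first by exists [::]; rewrite ?span_nil ?sub0v.
have [p pt p_orth] := orth_proj_exists x t_orth.
exists (x - p :: t); first by split.
rewrite !span_cons; apply/subvP => _ /memv_addP [_ /vlineP [k ->] [w ws ->]].
have -> : k *: x = k *: (x - p) + k *: p by rewrite -scalerDr subrK.
by rewrite -addrA memv_add ?memvZ ?memv_line // memvD ?memvZ // (subvP st).
Qed.

Lemma form_le_on_orth_span t : orth_seq t ->
  exists2 C, 0 <= C & forall v, v \in <<t>>%VS -> a v v <= C * b v v.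
Proof.
elim: t => [_|e t IHt [e_orth /IHt [C C_ge0 HC]]].
  by exists 0 => // v; rewrite span_nil memv0 => /eqP ->; rewrite (ip0l aP) mul0r.
have [K K_ge0 HK] : exists2 K, 0 <= K & a e e <= K * b e e.
  have [->|e0] := eqVneq e 0; first by exists 0; rewrite ?ip0l ?mul0r.
  have ee_gt0 : 0 < b e e by case: bP => _ _ /(_ e e0).
  exists (a e e / b e e); first by rewrite divr_ge0 ?(ip_ge0 aP) ?(ip_ge0 bP).
  by rewrite divfK ?gt_eqF.
exists (2%:R * (K + C)) => [|v]; first by rewrite mulr_ge0 ?addr_ge0.
rewrite span_cons => /memv_addP [_ /vlineP [k ->] [w wt ->]].
rewrite (ip_pythagoras bP); last by rewrite (ipZl bP) e_orth ?mulr0.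
have := ip_add_le aP (k *: e) w; rewrite !(ipZl aP, ipZr aP, ipZl bP, ipZr bP).
have := HC w wt; have ee_ge0 := ip_ge0 bP e; have ww_ge0 := ip_ge0 bP w.
have kk_ge0 : 0 <= k * k by rewrite -expr2 sqr_ge0.
have /(mulr_ge0 kk_ge0) : 0 <= K * b e e - a e e by rewrite subr_ge0.
have := mulr_ge0 C_ge0 (mulr_ge0 kk_ge0 ee_ge0).
have := mulr_ge0 K_ge0 ww_ge0.
lra.
Qed.

Lemma form_le_ip : exists2 C, 0 <= C & forall v, a v v <= C * b v v.
Proof.
have [t t_orth full_t] := orth_seq_span (vbasis (@fullv _ V)).
have [C C_ge0 HC] := form_le_on_orth_span t_orth.
exists C => // v; apply/HC/(subvP full_t).
by rewrite (span_basis (vbasisP _)) memvf.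
Qed.

End FiniteDimension.

Local Open Scope classical_set_scope.

Section SubspaceConstants.
Variables (R : realType) (V : vectType R) (b : V -> V -> R).
Variables (V1 V2 : {vspace V}).
Hypothesis bP : inner_product b.

Let gamma := cs_const b V1 V2.

Lemma cs_const_ub v1 v2 : v1 \in V1 -> v2 \in V2 ->
  b v1 v2 <= gamma * ipnorm b v1 * ipnorm b v2.
Proof.
move=> v1V1 v2V2.
have [->|v1_0] := eqVneq v1 0.
  by rewrite (ip0l bP) (ipnorm0 bP) mulr0 mul0r.
have [->|v2_0] := eqVneq v2 0; first by rewrite (ip0r bP) (ipnorm0 bP) mulr0.
have n12_gt0 : 0 < ipnorm b v1 * ipnorm b v2 by rewrite mulr_gt0 ?ipnorm_gt0.
rewrite -mulrA -ler_pdivrMr //; apply: ub_le_sup; last by exists v1, v2.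
exists 1 => _ [w1 [w2 [_ _ w1_0 w2_0 ->]]].
by rewrite ler_pdivrMr ?mul1r ?mulr_gt0 ?ipnorm_gt0 ?ip_cauchy_schwarz.
Qed.

Lemma cs_const_ge0 : 0 <= gamma.
Proof.
rewrite /gamma /cs_const; set S := [set r | _].
have [[_ [v1 [v2 [v1V1 v2V2 v1_0 v2_0 _]]]] | S0] := pselect (S !=set0).
  2: by rewrite sup_out // => -[].
have nv1V1 : - v1 \in V1 by rewrite memvN.
have := cs_const_ub v1V1 v2V2; have := cs_const_ub nv1V1 v2V2.
rewrite (ipNl bP) (ipnormN bP) -/gamma => ub_neg ub_pos.
have n1_gt0 := ipnorm_gt0 bP v1_0; have n2_gt0 := ipnorm_gt0 bP v2_0.
have : 0 <= gamma * ipnorm b v1 * ipnorm b v2 by lra.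
by rewrite -mulrA pmulr_lge0 ?mulr_gt0.
Qed.

Lemma cs_const_lb v1 v2 : v1 \in V1 -> v2 \in V2 ->
  - (gamma * ipnorm b v1 * ipnorm b v2) <= b v1 v2.
Proof.
move=> v1V1 v2V2; have nv1V1 : - v1 \in V1 by rewrite memvN.
by have := cs_const_ub nv1V1 v2V2; rewrite (ipNl bP) (ipnormN bP) lerNl.
Qed.

Lemma ip_add_ge_cs x y : x \in V1 -> y \in V2 ->
  (1 - gamma ^+ 2) * b y y <= b (x + y) (x + y).
Proof.
move=> xV1 yV2; have := cs_const_lb xV1 yV2.
rewrite !(ip_linE bP) (ip_sym bP y x) -(sqr_ipnorm bP x) -(sqr_ipnorm bP y).
have := sqr_ge0 (ipnorm b x - gamma * ipnorm b y); nra.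
Qed.

Lemma ip_cross_ge_cs x y : x \in V1 -> y \in V2 ->
  - (gamma * (b x x + b y y)) <= 2%:R * b x y.
Proof.
move=> xV1 yV2; have := cs_const_lb xV1 yV2.
rewrite -(sqr_ipnorm bP x) -(sqr_ipnorm bP y).
have := mulr_ge0 cs_const_ge0 (sqr_ge0 (ipnorm b x - ipnorm b y)); nra.
Qed.

End SubspaceConstants.

Lemma inv_const_ub (R : realType) (V : vectType R) (ip a : V -> V -> R)
    (V2 : {vspace V}) v :
  inner_product ip -> inner_product a -> v \in V2 ->
  a v v <= inv_const ip a V2 ^+ 2 * ip v v.
Proof.
move=> ipP aP vV2.
have [->|v0] := eqVneq v 0; first by rewrite (ip0l aP) (ip0l ipP) mulr0.
have [C C_ge0 HC] := form_le_ip ipP aP.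
have ratio_le : ipnorm a v / ipnorm ip v <= inv_const ip a V2.
  apply: ub_le_sup; last by exists v.
  exists (Num.sqrt C) => _ [w [_ w0 ->]].
  rewrite ler_pdivrMr ?ipnorm_gt0 // /ipnorm -sqrtrM ?ip_ge0 //.
  by rewrite ler_sqrt ?HC // mulr_ge0 ?(ip_ge0 ipP).
rewrite ler_pdivrMr ?ipnorm_gt0 // in ratio_le.
have na_ge0 : 0 <= ipnorm a v := sqrtr_ge0 _.
rewrite -(sqr_ipnorm aP) -(sqr_ipnorm ipP) -exprMn ler_sqr ?nnegrE //.
exact: le_trans ratio_le.
Qed.

Local Close Scope classical_set_scope.

Section Energy.
Variables (R : realType) (V : lmodType R) (ip a : V -> V -> R) (tau : R).

(* E^{n+1/2}, with x0, y0 the two components at time n and x1, y1 at n+1. *)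
Definition energy (x0 x1 y0 y1 : V) : R :=
  ip ((x1 + y1) - (x0 + y0)) ((x1 + y1) - (x0 + y0))
  + tau ^+ 2 / 2%:R * ((a x1 x1 + a x0 x0) + (a y1 y1 + a y0 y0))
  + tau ^+ 2 * a y1 x0 + tau ^+ 2 * a x1 y0
  - tau ^+ 2 / 2%:R * a (y1 - y0) (y1 - y0).

Hypotheses (ipP : inner_product ip) (aP : inner_product a).

Lemma energy_increment x0 x1 x2 y0 y1 y2 :
  let dd := (x2 + y2) - 2%:R *: (x1 + y1) + (x0 + y0) in
  energy x1 x2 y1 y2 - energy x0 x1 y0 y1
  = (ip dd (x2 - x0) + tau ^+ 2 / 2%:R * a (x2 + x0 + 2%:R *: y1) (x2 - x0))
  + (ip dd (y2 - y0) + tau ^+ 2 * a (x1 + y1) (y2 - y0)).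
Proof.
rewrite /energy !(ip_linE ipP) !(ip_linE aP).
rewrite !(ip_sym_formE ipP) !(ip_sym_formE aP) /sym_form; lra.
Qed.

End Energy.

Section LeapfrogScheme.
Variables (R : realType) (V : vectType R) (ip a : V -> V -> R).
Variables (V1 V2 : {vspace V}) (tau : R).
Hypotheses (ipP : inner_product ip) (aP : inner_product a).

Lemma energy_ge x0 x1 y0 y1 :
  x0 \in V1 -> x1 \in V1 -> y0 \in V2 -> y1 \in V2 ->
  (1 - cs_const ip V1 V2 ^+ 2 - inv_const ip a V2 ^+ 2 * tau ^+ 2 / 2%:R)
    * ip (y1 - y0) (y1 - y0)
  + tau ^+ 2 * (1 - cs_const a V1 V2) / 2%:R
    * ((a x1 x1 + a x0 x0) + (a y1 y1 + a y0 y0))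
  <= energy ip a tau x0 x1 y0 y1.
Proof.
move=> x0V1 x1V1 y0V2 y1V2.
have dx : x1 - x0 \in V1 by rewrite memvB.
have dy : y1 - y0 \in V2 by rewrite memvB.
have tau2_ge0 : 0 <= tau ^+ 2 := sqr_ge0 tau.
have := ip_add_ge_cs ipP dx dy.
have := ler_wpM2l tau2_ge0 (inv_const_ub ipP aP dy).
have := ler_wpM2l tau2_ge0 (ip_cross_ge_cs aP x0V1 y1V2).
have := ler_wpM2l tau2_ge0 (ip_cross_ge_cs aP x1V1 y0V2).
rewrite /energy (ip_sym aP y1 x0) opprD addrACA; lra.
Qed.

Variables (N : nat) (u1 u2 : nat -> V).
Hypotheses (u1V1 : forall n, (n <= N)%N -> u1 n \in V1)
           (u2V2 : forall n, (n <= N)%N -> u2 n \in V2).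
Hypothesis scheme1 :
  forall n, (1 <= n)%N -> (n <= N.-1)%N -> forall w, w \in V1 ->
  ip ((u1 n.+1 + u2 n.+1) - 2%:R *: (u1 n + u2 n) + (u1 n.-1 + u2 n.-1)) w
  + tau ^+ 2 / 2%:R * a (u1 n.+1 + u1 n.-1 + 2%:R *: u2 n) w = 0.
Hypothesis scheme2 :
  forall n, (1 <= n)%N -> (n <= N.-1)%N -> forall w, w \in V2 ->
  ip ((u1 n.+1 + u2 n.+1) - 2%:R *: (u1 n + u2 n) + (u1 n.-1 + u2 n.-1)) w
  + tau ^+ 2 * a (u1 n + u2 n) w = 0.

Lemma energy_conserved n : (n <= N.-1)%N ->
  energy ip a tau (u1 n) (u1 n.+1) (u2 n) (u2 n.+1)
  = energy ip a tau (u1 0) (u1 1) (u2 0) (u2 1).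
Proof.
elim: n => [//|n IHn n_lt]; apply: etrans (IHn (ltnW n_lt)).
have n2_le : (n.+2 <= N)%N by lia.
have n_le : (n <= N)%N by lia.
apply/eqP; rewrite -subr_eq0 energy_increment //.
rewrite (scheme1 (n := n.+1)) ?(scheme2 (n := n.+1)) ?addr0 //.
  by rewrite memvB ?u2V2.
by rewrite memvB ?u1V1.
Qed.

End LeapfrogScheme.

Theorem mainTheorem2 (R : realType) (VH : vectType R)
  (ip a : VH -> VH -> R) (VH1 VH2 : {vspace VH})
  (tau : R) (N : nat) (u1 u2 : nat -> VH) :
  inner_product ip -> inner_product a ->
  (VH1 + VH2)%VS = fullv ->
  cs_const ip VH1 VH2 < 1 ->
  cs_const a VH1 VH2 < 1 ->
  0 < tau -> (2 <= N)%N ->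
  (forall n, (n <= N)%N -> u1 n \in VH1) ->
  (forall n, (n <= N)%N -> u2 n \in VH2) ->
  (forall n, (1 <= n)%N -> (n <= N.-1)%N -> forall w, w \in VH1 ->
     ip ((u1 n.+1 + u2 n.+1) - 2%:R *: (u1 n + u2 n) + (u1 n.-1 + u2 n.-1)) w
     + tau ^+ 2 / 2%:R * a (u1 n.+1 + u1 n.-1 + 2%:R *: u2 n) w = 0) ->
  (forall n, (1 <= n)%N -> (n <= N.-1)%N -> forall w, w \in VH2 ->
     ip ((u1 n.+1 + u2 n.+1) - 2%:R *: (u1 n + u2 n) + (u1 n.-1 + u2 n.-1)) w
     + tau ^+ 2 * a (u1 n + u2 n) w = 0) ->
  let gamma := cs_const ip VH1 VH2 in
  let gamma_a := cs_const a VH1 VH2 in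
  let alpha := inv_const ip a VH2 in
  let E12 :=
    ip ((u1 1%N + u2 1%N) - (u1 0%N + u2 0%N)) ((u1 1%N + u2 1%N) - (u1 0%N + u2 0%N))
    + tau ^+ 2 / 2%:R * ((a (u1 1%N) (u1 1%N) + a (u1 0%N) (u1 0%N))
                        + (a (u2 1%N) (u2 1%N) + a (u2 0%N) (u2 0%N)))
    + tau ^+ 2 * a (u2 1%N) (u1 0%N) + tau ^+ 2 * a (u1 1%N) (u2 0%N)
    - tau ^+ 2 / 2%:R * a (u2 1%N - u2 0%N) (u2 1%N - u2 0%N) in
  tau ^+ 2 * alpha ^+ 2 <= 2%:R * (1 - gamma) ->
  forall n, (n <= N.-1)%N ->
    (1 - gamma ^+ 2 - alpha ^+ 2 * tau ^+ 2 / 2%:R)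
      * ip (u2 n.+1 - u2 n) (u2 n.+1 - u2 n)
    + tau ^+ 2 * (1 - gamma_a) / 2%:R
      * ((a (u1 n.+1) (u1 n.+1) + a (u1 n) (u1 n))
         + (a (u2 n.+1) (u2 n.+1) + a (u2 n) (u2 n)))
    <= E12.
Proof.
move=> ipP aP _ _ _ _ N_ge2 u1V1 u2V2 scheme1 scheme2.
move=> gamma gamma_a alpha E12 _ n n_le.
have n1_le : (n.+1 <= N)%N by lia.
rewrite -[E12]/(energy ip a tau (u1 0) (u1 1) (u2 0) (u2 1)).
rewrite -(energy_conserved ipP aP u1V1 u2V2 scheme1 scheme2 n_le).
by apply: energy_ge; rewrite ?u1V1 ?u2V2 // ltnW.
Qed.
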